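(* The product of any collection of mild mixing systems is mild mixing: if $(X_i,T_i)$, $i\in I$, are mild mixing, then the product system $(\prod_{i\in I}X_i,\prod_{i\in I}T_i)$ is mild mixing.
   Context: A dynamical system $(X,T)$ consists of a compact metric space $X$ and a homeomorphism $T:X\to X$. $\mathbb N=\{1,2,\dots\}$; for $U,V\subset X$, $N(U,V)=\{n\in\mathbb N:T^n(U)\cap V\ne\emptyset\}$. For a finite $F\subset\mathbb Z$, $\sigma_F$ is the sum of its elements ($\sigma_\emptyset=0$); for $A\subset\mathbb Z$, $IP(A)=\{\sigma_F:F\subset A \text{ finite}\}$ and $SIP(A)=\{a-b:a,b\in IP(A)\}$. A set $B\subset\mathbb N$ is an SIP set if $SIP(A)\cap\mathbb N\subset B$ for some infinite $A\subset\mathbb N$. A system $(X,T)$ is mild mixing if for all nonempty open $U,V\subset X$, the set $N(U,V)$ has nonempty intersection with every SIP set. *)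

From HB Require Import structures.
From mathcomp Require Import all_boot all_order all_algebra.
From mathcomp Require Import all_classical all_reals all_analysis.
Set Implicit Arguments. Unset Strict Implicit. Unset Printing Implicit Defensive.
Import Order.TTheory GRing.Theory Num.Theory.
Local Open Scope classical_set_scope.
Local Open Scope ring_scope.

Definition homeomorphism (X : topologicalType) (T : X -> X) : Prop :=
  exists S : X -> X, [/\ cancel T S, cancel S T, continuous T & continuous S].

Definition return_times (X : Type) (T : X -> X) (U V : set X) : set nat :=
  [set n | (0 < n)%N /\ (iter n T @` U) `&` V !=set0].

Definition IP (A : set nat) : set int :=
  [set z | exists F : seq nat, [/\ uniq F, (forall a, a \in F -> A a) &
                                   z = (\sum_(a <- F) a)%:Z]].

Definition SIP (A : set nat) : set int :=
  [set z | exists a b, [/\ IP A a, IP A b & z = a - b]].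

Definition SIP_set (B : set nat) : Prop :=
  B `<=` [set n | (0 < n)%N] /\
  exists A : set nat, [/\ infinite_set A, A `<=` [set n | (0 < n)%N] &
    forall n : nat, (0 < n)%N -> SIP A n%:Z -> B n].

Definition mild_mixing (X : topologicalType) (T : X -> X) : Prop :=
  forall U V : set X, open U -> open V -> U !=set0 -> V !=set0 ->
  forall B : set nat, SIP_set B -> return_times T U V `&` B !=set0.

Definition prod_map (I : Type) (X : I -> Type) (T : forall i, X i -> X i)
  : prod_topology X -> prod_topology X :=
  fun x i => T i (x i).

From HB Require Import structures.
From mathcomp Require Import all_boot all_order all_algebra.
From mathcomp Require Import all_classical all_reals all_analysis.
From mathcomp Require Import zify.
From Stdlib Require List.
Set Implicit Arguments. Unset Strict Implicit. Unset Printing Implicit Defensive.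
Import GRing.Theory.
Local Open Scope classical_set_scope.

(* Call C a set of naturals whose translates C - k all meet every SIP set.
   For a mild mixing homeomorphism T and nonempty open U, V, the set
   C `&` N(U,V) is again of this kind.  Given an SIP set generated by A, mild
   mixing first gives k in N(U,V) `&` SIP(A); inside W = U `&` T^-k V it then
   gives, one after the other, return times p_j of ever smaller open subsets
   of W, represented in SIP(A) by disjoint blocks of ever larger elements of
   A (this is what lacunary subsets of A are for).  All finite sums of the p_j
   return to W from a common point, so any s in SIP({p_j}) with s + k in C has
   s + k in N(U,V) `&` SIP(A).  A basic open set of the product depends on
   finitely many coordinates, so finitely many such steps prove the product
   mild mixing. *)

Lemma IP_sumn (A : set nat) F :
  uniq F -> (forall a, a \in F -> A a) -> IP A (Posz (sumn F)).
Proof. by move=> uF FA; exists F; rewrite sumnE. Qed.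

Lemma sumn_filterC (p : pred nat) F :
  sumn F = sumn [seq a <- F | p a] + sumn [seq a <- F | ~~ p a].
Proof. by rewrite !sumnE !big_filter [LHS](bigID p). Qed.

Lemma mem_leq_sumn (L : seq nat) a : a \in L -> a <= sumn L.
Proof. by move=> aL; rewrite (perm_sumn (perm_to_rem aL)) /= leq_addr. Qed.

Lemma SIP_disjoint_sums (A : set nat) z : SIP A z -> exists F G,
  [/\ uniq (F ++ G), (forall a, a \in F ++ G -> A a) &
      z = (Posz (sumn F) - Posz (sumn G))%R].
Proof.
move=> [_ [_ [[F [uF FA ->]] [G [uG GA ->]] ->]]]; rewrite -!sumnE.
have common : sumn [seq a <- F | a \in G] = sumn [seq a <- G | a \in F].
  apply/perm_sumn/uniq_perm; rewrite ?filter_uniq // => a.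
  by rewrite !mem_filter andbC.
exists [seq a <- F | a \notin G], [seq a <- G | a \notin F]; split.
- rewrite cat_uniq !filter_uniq //= andbT; apply/hasPn => a.
  by rewrite !mem_filter => /andP[_ aG]; rewrite negb_and aG.
- by move=> a; rewrite mem_cat !mem_filter => /orP[/andP[_ /FA]|/andP[_ /GA]].
rewrite (sumn_filterC (mem G) F) (sumn_filterC (mem F) G) common !PoszD.
by rewrite opprD addrACA subrr add0r.
Qed.

Lemma bigmax_mem (L : seq nat) : L != [::] -> \max_(i <- L) i \in L.
Proof.
elim: L => // x [|y L] IH _; first by rewrite big_seq1 mem_head.
rewrite big_cons /= inE; move: IH; set m := \max_(i <- _) i => IH.
by case: leqP => _; rewrite ?eqxx ?IH ?orbT.
Qed.

Lemma leq_sum_uniq_lt (a : nat -> nat) m I : uniq I -> (forall i, i \in I -> i < m) ->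
  \sum_(i <- I) a i <= \sum_(i < m) a i.
Proof.
move=> uI Im; rewrite -(big_mkord xpredT) -/(index_iota 0 m).
apply: (uniq_sub_le_big leqnn (fun x y => leq_addr y x)) => //.
  exact: iota_uniq.
by move=> i /Im; rewrite mem_index_iota.
Qed.

Lemma lacunary_gap (a : nat -> nat) M : (forall n, M + \sum_(i < n) a i < a n) ->
  forall I1 I2, uniq (I1 ++ I2) -> \sum_(i <- I2) a i < \sum_(i <- I1) a i ->
  M + \sum_(i <- I2) a i < \sum_(i <- I1) a i.
Proof.
move=> lac I1 I2 uI lt21.
move: (uI); rewrite cat_uniq => /and3P[uI1 /hasPn disj uI2].
(* The largest index decides, since a m exceeds M plus all smaller terms. *)
pose m := \max_(i <- I1 ++ I2) i.
have m_mem : m \in I1 ++ I2.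
  by apply: bigmax_mem; case: (I1) lt21 => //; rewrite big_nil.
have sum_below_m (J : seq nat) : uniq J -> {subset J <= I1 ++ I2} -> m \notin J ->
    \sum_(i <- J) a i <= \sum_(i < m) a i.
  move=> uJ JI mJ; apply: leq_sum_uniq_lt => // i iJ.
  rewrite ltn_neqAle leq_bigmax_seq ?JI // andbT.
  by move: mJ; apply: contraNneq => <-.
have lac_m := lac m; clearbody m.
have sub1 : {subset I1 <= I1 ++ I2} by move=> i iI; rewrite mem_cat iI.
have sub2 : {subset I2 <= I1 ++ I2} by move=> i iI; rewrite mem_cat iI orbT.
move: m_mem; rewrite mem_cat => /orP[mI1|mI2].
- have mI2 : m \notin I2 by apply: contraL mI1 => /disj.
  have := sum_below_m I2 uI2 sub2 mI2.
  rewrite (big_rem _ mI1) /= => S2_le.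
  apply: leq_trans (leq_addr _ _); apply: leq_ltn_trans lac_m.
  by rewrite leq_add2l.
- have mI1 : m \notin I1 := disj m mI2.
  have := sum_below_m I1 uI1 sub1 mI1.
  move=> S1_le; exfalso; move: lt21; apply/negP; rewrite -leqNgt (big_rem _ mI2) /=.
  apply: leq_trans (leq_addr _ _); apply/ltnW/(leq_ltn_trans S1_le).
  exact: leq_ltn_trans (leq_addl M _) lac_m.
Qed.

Lemma eq_Posz_sub n x y : Posz n = (Posz x - Posz y)%R -> x = n + y.
Proof. by move/eqP; rewrite eq_sym subr_eq -PoszD => /eqP[]. Qed.

Lemma infinite_unbounded (A : set nat) : infinite_set A -> forall N, exists a, A a /\ N < a.
Proof.
move=> infA N; have /infinite_setN0[a [Aa /= aN]] := infinite_setD infA (finite_II N.+1).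
by exists a; split => //; rewrite ltnNge -ltnS; apply/negP.
Qed.

Lemma infinite_range_inj (f : nat -> nat) : injective f -> infinite_set (range f).
Proof.
move=> fi; apply/infiniteP.
by have /card_eqPle[] : (range f #= [set: nat])%card by apply: inj_card_eq => x y _ _ /fi.
Qed.

Lemma SIP_range (a : nat -> nat) z : SIP (range a) z -> exists I1 I2,
  uniq (I1 ++ I2) /\ z = (Posz (\sum_(i <- I1) a i) - Posz (\sum_(i <- I2) a i))%R.
Proof.
move=> /SIP_disjoint_sums[F [G [uFG FGa ->]]].
have idx_ex v : exists j, range a v -> a j = v.
  by have [[j _ <-]|nav] := pselect (range a v); [exists j | exists 0].
have [idx idxK] := choice idx_ex.
have sum_idx L : {subset L <= F ++ G} -> sumn L = \sum_(i <- map idx L) a i.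
  move=> LFG; rewrite sumnE big_map; apply: eq_big_seq => v /LFG/FGa.
  by move/idxK.
exists (map idx F), (map idx G); split.
  rewrite -map_cat map_inj_in_uniq // => v w /FGa/idxK av /FGa/idxK aw e.
  by rewrite -av e aw.
by rewrite -!sum_idx // => v vL; rewrite mem_cat vL ?orbT.
Qed.

Lemma lacunary_subset (A : set nat) M : infinite_set A -> exists A',
  [/\ infinite_set A', A' `<=` A, (forall a, A' a -> M < a) &
      forall n, 0 < n -> SIP A' (Posz n) -> M < n].
Proof.
move=> /infinite_unbounded/choice[g gA].
pose fix psum n := if n is k.+1 then psum k + g (M + psum k) else 0.
pose a n := g (M + psum n).
have psumE n : psum n = \sum_(i < n) a i.
  elim: n => [|n IH]; first by rewrite big_ord0.
  by rewrite big_ord_recr /= -IH.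
have lac n : M + \sum_(i < n) a i < a n by rewrite -psumE; exact: (gA _).2.
have a_step n : a n < a n.+1.
  by apply: leq_ltn_trans (lac n.+1); rewrite big_ord_recr /= addnA leq_addl.
exists (range a); split.
- exact/infinite_range_inj/incn_inj/leq_mono/(homo_ltn ltn_trans a_step).
- by move=> _ [n _ <-]; exact: (gA _).1.
- by move=> _ [n _ <-]; exact: leq_ltn_trans (leq_addr _ _) (lac n).
move=> n n0 /SIP_range[I1 [I2 [uI /eq_Posz_sub e]]].
by have := lacunary_gap lac uI; rewrite e; lia.
Qed.

Lemma uniq_flatten_increasing (H : nat -> seq nat) (K : seq nat) :
  uniq K -> (forall b, b \in K -> uniq (H b)) ->
  (forall b b' a a', b < b' -> a \in H b -> a' \in H b' -> a < a') ->
  uniq (flatten (map H K)).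
Proof.
move=> + + incr; elim: K => //= b K IH /andP[bK uK] uH.
rewrite cat_uniq uH ?mem_head ?IH ?andbT //; last by move=> b' b'K; rewrite uH // inE b'K orbT.
apply/hasPn => a /flatten_mapP[b' b'K ab']; apply/negP => ab.
have [bb'|b'b|eb] := ltngtP b b'.
- by have := incr _ _ _ _ bb' ab ab'; rewrite ltnn.
- by have := incr _ _ _ _ b'b ab' ab; rewrite ltnn.
- by move: bK; rewrite eb b'K.
Qed.

Lemma SIP_sum_blocks (A : set nat) (P Q : nat -> seq nat) (K : seq nat) : uniq K ->
  (forall b, b \in K -> [/\ uniq (P b), uniq (Q b) & forall a, a \in P b ++ Q b -> A a]) ->
  (forall b b' a a', b < b' -> a \in P b ++ Q b -> a' \in P b' ++ Q b' -> a < a') ->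
  SIP A (\sum_(b <- K) (Posz (sumn (P b)) - Posz (sumn (Q b))))%R.
Proof.
move=> uK blocks incr.
have flat_IP (H : nat -> seq nat) : (forall b, b \in K -> uniq (H b)) ->
    (forall b a, a \in H b -> a \in P b ++ Q b) ->
    IP A (Posz (sumn (flatten (map H K)))).
  move=> uH HPQ; apply: IP_sumn.
    apply: uniq_flatten_increasing => // b b' a a' bb' /HPQ ab /HPQ a'b'.
    exact: incr bb' ab a'b'.
  by move=> a /flatten_mapP[b bK /HPQ]; have [_ _] := blocks b bK; apply.
eexists; eexists; split; [apply: (flat_IP P) | apply: (flat_IP Q) |].
- by move=> b /blocks[].
- by move=> b a aP; rewrite mem_cat aP.
- by move=> b /blocks[].
- by move=> b a aQ; rewrite mem_cat aQ orbT.
rewrite sumrB !sumn_flatten -!map_comp !sumnE !big_map.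
by rewrite !(big_morph Posz PoszD (erefl _)).
Qed.

Lemma SIP_signed_sum_blocks (A : set nat) (P Q : nat -> seq nat) (I1 I2 : seq nat) :
  uniq (I1 ++ I2) ->
  (forall b, b \in I1 ++ I2 ->
     [/\ uniq (P b), uniq (Q b) & forall a, a \in P b ++ Q b -> A a]) ->
  (forall b b' a a', b < b' -> a \in P b ++ Q b -> a' \in P b' ++ Q b' -> a < a') ->
  let w b := (Posz (sumn (P b)) - Posz (sumn (Q b)))%R in
  SIP A (\sum_(b <- I1) w b - \sum_(b <- I2) w b)%R.
Proof.
move=> uI blocks incr w.
pose P' b := if b \in I2 then Q b else P b.
pose Q' b := if b \in I2 then P b else Q b.
have memPQ' b a : (a \in P' b ++ Q' b) = (a \in P b ++ Q b).
  by rewrite /P' /Q'; case: ifP; rewrite // !mem_cat orbC.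
have [_ /hasPn disj _] := and3P (etrans (esym (cat_uniq _ _)) uI).
suff -> : (\sum_(b <- I1) w b - \sum_(b <- I2) w b)%R =
          (\sum_(b <- I1 ++ I2) (Posz (sumn (P' b)) - Posz (sumn (Q' b))))%R.
  apply: SIP_sum_blocks => // [b bI|b b' a a' bb'].
    have [uP uQ PQA] := blocks b bI; split; last by move=> a; rewrite memPQ'; apply: PQA.
      by rewrite /P'; case: ifP.
    by rewrite /Q'; case: ifP.
  by rewrite !memPQ'; apply: incr.
rewrite big_cat /= -sumrN; congr (_ + _)%R; apply: eq_big_seq => b bI.
  have bI2 : b \notin I2 by apply: contraL bI; apply: disj.
  by rewrite /P' /Q' /w (negbTE bI2).
by rewrite /P' /Q' /w bI opprB.
Qed.

Lemma SIP_signed_sum_intervals (A : set nat) (t : nat -> nat) (P Q : nat -> seq nat)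
    (I1 I2 : seq nat) :
  (forall j, t j <= t j.+1) -> uniq (I1 ++ I2) ->
  (forall b, [/\ uniq (P b), uniq (Q b) & forall a, a \in P b ++ Q b ->
     A a /\ (if b is j.+1 then t j else 0) < a <= t b]) ->
  let w b := (Posz (sumn (P b)) - Posz (sumn (Q b)))%R in
  SIP A (\sum_(b <- I1) w b - \sum_(b <- I2) w b)%R.
Proof.
move=> t_step uI blocks; apply: SIP_signed_sum_blocks => // [b _|b b' a a' bb' ab a'b'].
  by have [uP uQ PQA] := blocks b; split=> // a /PQA[].
have [_ _ /(_ a ab)[_ /andP[_ atb]]] := blocks b.
case: b' bb' a'b' => // j bj a'b'.
have [_ _ /(_ a' a'b')[_ /andP[tja' _]]] := blocks j.+1.
have t_mono : {homo t : i j / i <= j} by apply: homo_leq leqnn leq_trans t_step.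
by apply: leq_ltn_trans tja'; apply: leq_trans atb (t_mono _ _ _).
Qed.

Lemma SIP_set_SIP (A : set nat) : infinite_set A -> A `<=` [set n | 0 < n] ->
  SIP_set [set n | 0 < n /\ SIP A (Posz n)].
Proof.
move=> infA Apos; split; first by move=> n [].
by exists A; split=> // n n0 An.
Qed.

Lemma SIP_set_neq0 (B : set nat) : SIP_set B -> B !=set0.
Proof.
move=> [_ [A [/infinite_setN0[a Aa] Apos AB]]]; exists a; apply: AB; first exact: Apos.
exists (Posz a), 0%R; split; last by rewrite subr0.
  by have := @IP_sumn A [:: a] isT; rewrite /= addn0; apply => b; rewrite inE => /eqP->.
exact: (@IP_sumn A [::]).
Qed.

Definition SIPstar_translates (C : set nat) : Prop :=
  forall k B, SIP_set B -> exists s, B s /\ C (s + k).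

Lemma SIPstar_translatesT : SIPstar_translates setT.
Proof. by move=> k B /SIP_set_neq0[s Bs]; exists s. Qed.

Lemma SIPstar_translatesS (C C' : set nat) : C `<=` C' ->
  SIPstar_translates C -> SIPstar_translates C'.
Proof. by move=> CC' SC k B /(SC k)[s [Bs Cs]]; exists s; split=> //; apply: CC'. Qed.

Lemma iter_continuous (Y : topologicalType) (T : Y -> Y) :
  continuous T -> forall n, continuous (iter n T).
Proof.
move=> cT; elim => [|n IH] x; first exact: cvg_id.
exact: (continuous_comp (IH x) (cT _)).
Qed.

Lemma open_iter_preimage (Y : topologicalType) (T : Y -> Y) n (A : set Y) :
  continuous T -> open A -> open (iter n T @^-1` A).
Proof. by move=> cT; move/continuousP: (iter_continuous cT (n := n)); apply. Qed.

Lemma iter_surj (Y : Type) (T : Y -> Y) : (forall y, exists x, T x = y) ->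
  forall n y, exists x, iter n T x = y.
Proof.
move=> Tsurj; elim=> [|n IH] y; first by exists y.
have [z <-] := Tsurj y; have [x <-] := IH z; by exists x.
Qed.

Lemma nested_returns (Y : Type) (T : Y -> Y) (W : nat -> set Y) (p : nat -> nat) :
  (forall j, W j.+1 `<=` W j `&` iter (p j) T @^-1` W j) ->
  forall N I x, uniq I -> (forall i, i \in I -> i < N) -> W N x ->
  W 0 (iter (\sum_(i <- I) p i) T x).
Proof.
move=> Wsub; elim=> [|N IH] I x uI IN.
  by case: I uI IN => [|i I] _ IN; [rewrite big_nil | have := IN i (mem_head _ _)].
move=> /Wsub[WNx WNpx].
have lt_N J : {subset J <= I} -> N \notin J -> forall i, i \in J -> i < N.
  move=> JI NJ i iJ; have := IN i (JI i iJ); rewrite ltnS leq_eqVlt => /predU1P[eiN|//].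
  by move: NJ; rewrite -eiN iJ.
have [NI|NI] := boolP (N \in I); last by apply: IH uI _ WNx; apply: lt_N.
rewrite (big_rem _ NI) /= addnC iterD.
apply: IH (rem_uniq _ uI) _ WNpx; apply: lt_N => [i /mem_rem //|].
by rewrite mem_rem_uniq // inE eqxx.
Qed.

Lemma IP_recurrence (Y : topologicalType) (T : Y -> Y) (Q : nat -> nat -> nat -> Prop) :
  continuous T ->
  (forall W : set Y, open W -> W !=set0 ->
     forall t, exists p t', Q t p t' /\ return_times T W W p) ->
  forall (W : set Y) t0, open W -> W !=set0 ->
  exists p t : nat -> nat, [/\ t 0 = t0, forall j, Q (t j) (p j) (t j.+1) &
    forall N, exists x, forall I, uniq I -> (forall i, i \in I -> i < N) ->
      W (iter (\sum_(i <- I) p i) T x)].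
Proof.
move=> cT step W t0 oW W0.
pose good (V : set Y) := open V /\ V !=set0.
(* The premise [good s.1] makes the step total, so that [choice] applies. *)
have next (s : set Y * nat) : exists s' : set Y * nat, good s.1 -> exists p,
    [/\ Q s.2 p s'.2, s'.1 = s.1 `&` iter p T @^-1` s.1 & good s'.1].
  case: s => V t; have [[oV V0]|bad] := pselect (good V); last by exists (V, t).
  have [p [t' [Qp [_ [_ [[v Vv <-] Vpv]]]]]] := step V oV V0 t.
  exists (V `&` iter p T @^-1` V, t') => _; exists p; split => //; split.
    by apply: openI => //; exact: open_iter_preimage.
  by exists v.
have [f fP] := choice next.
pose s j := iter j f (W, t0).
have good_s j : good (s j).1.
  elim: j => [|j IH]; first by [].
  by have [p [_ _]] := fP _ IH.
have [p pP] := choice (fun j => fP _ (good_s j)).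
exists p, (fun j => (s j).2); split => //; first by move=> j; have [] := pP j.
move=> N; have [x xN] := (good_s N).2; exists x => I uI IN.
apply: (@nested_returns _ _ (fun j => (s j).1)) uI IN xN => j.
by have [_ -> _] := pP j.
Qed.

Lemma IP_returns_return_times (Y : Type) (T : Y -> Y) (U V : set Y) k (p : nat -> nat)
    s (I1 I2 : seq nat) :
  (forall N, exists x, forall I, uniq I -> (forall i, i \in I -> i < N) ->
     (U `&` iter k T @^-1` V) (iter (\sum_(i <- I) p i) T x)) ->
  0 < s -> uniq I1 -> uniq I2 -> \sum_(i <- I1) p i = s + \sum_(i <- I2) p i ->
  return_times T U V (s + k).
Proof.
move=> ret s0 uI1 uI2 cd.
have [x xret] := ret (\max_(i <- I1 ++ I2) i).+1.
have xretJ J : uniq J -> {subset J <= I1 ++ I2} ->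
    (U `&` iter k T @^-1` V) (iter (\sum_(i <- J) p i) T x).
  by move=> uJ JI; apply: xret uJ _ => i /JI iI; rewrite ltnS; exact: leq_bigmax_seq.
have [Udx _] := xretJ I2 uI2 (mem_subseq (suffix_subseq I1 I2)).
have [_ Vcx] := xretJ I1 uI1 (mem_subseq (prefix_subseq I1 I2)).
split; first by rewrite addn_gt0 s0.
set d := \sum_(i <- I2) p i in Udx cd.
exists (iter (s + k) T (iter d T x)); split; first by exists (iter d T x).
by rewrite -iterD addnAC -cd addnC iterD.
Qed.

Section MildMixing.
Variables (Y : topologicalType) (T : Y -> Y).
Hypotheses (cT : continuous T) (mmT : mild_mixing T).

Lemma mild_mixing_SIP (U V : set Y) (A : set nat) :
  open U -> open V -> U !=set0 -> V !=set0 ->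
  infinite_set A -> A `<=` [set n | 0 < n] ->
  exists n, return_times T U V n /\ SIP A (Posz n).
Proof.
move=> oU oV U0 V0 infA Apos.
by have [n [Nn [_ An]]] := mmT oU oV U0 V0 (SIP_set_SIP infA Apos); exists n.
Qed.

Lemma lacunary_return_time (A : set nat) (W : set Y) t :
  infinite_set A -> open W -> W !=set0 -> exists p F G,
  [/\ t < p, uniq F, uniq G, (forall a, a \in F ++ G -> A a /\ t < a) &
      Posz p = (Posz (sumn F) - Posz (sumn G))%R] /\ return_times T W W p.
Proof.
move=> infA oW W0; have [A' [infA' A'A A'gt A'SIP]] := lacunary_subset t infA.
have A'pos : A' `<=` [set n | 0 < n] by move=> a /A'gt /(leq_ltn_trans (leq0n t)).
have [p [Np Ap]] := mild_mixing_SIP oW oW W0 W0 infA' A'pos.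
have [F [G [uFG FGA' ep]]] := SIP_disjoint_sums Ap.
exists p, F, G; split => //; move: (uFG); rewrite cat_uniq => /and3P[uF _ uG].
split => //; first exact: A'SIP Np.1 Ap.
by move=> a /FGA' A'a; split; [exact: A'A | exact: A'gt].
Qed.

Lemma lacunary_IP_system (A : set nat) (W : set Y) t0 :
  infinite_set A -> open W -> W !=set0 ->
  exists (p t : nat -> nat) (F G : nat -> seq nat), [/\ t 0 = t0,
    forall j, [/\ t j < p j <= t j.+1, uniq (F j), uniq (G j),
      (forall a, a \in F j ++ G j -> A a /\ t j < a <= t j.+1) &
      Posz (p j) = (Posz (sumn (F j)) - Posz (sumn (G j)))%R] &
    forall N, exists x, forall I, uniq I -> (forall i, i \in I -> i < N) ->
      W (iter (\sum_(i <- I) p i) T x)].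
Proof.
move=> infA oW W0.
pose block t p t' := exists FG : seq nat * seq nat,
  [/\ t < p <= t', uniq FG.1, uniq FG.2,
      (forall a, a \in FG.1 ++ FG.2 -> A a /\ t < a <= t') &
      Posz p = (Posz (sumn FG.1) - Posz (sumn FG.2))%R].
have step V : open V -> V !=set0 ->
    forall t, exists p t', block t p t' /\ return_times T V V p.
  move=> oV V0 t.
  have [p [F [G [[tp uF uG FGA ep] Np]]]] := lacunary_return_time t infA oV V0.
  exists p, (p + sumn (F ++ G)); split => //; exists (F, G); split => //=.
    by rewrite tp leq_addr.
  move=> a aFG; have [Aa ta] := FGA a aFG; split => //; rewrite ta /=.
  exact: leq_trans (mem_leq_sumn aFG) (leq_addl _ _).
have [p [t [tt0 tP ret]]] := IP_recurrence cT step t0 oW W0.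
have [FG FGP] := choice tP.
by exists p, t, (fun j => (FG j).1), (fun j => (FG j).2).
Qed.

Lemma return_times_meet_SIPstar (C : set nat) (U V : set Y) (B : set nat) :
  SIPstar_translates C -> open U -> open V -> U !=set0 -> V !=set0 -> SIP_set B ->
  exists n, [/\ B n, C n & return_times T U V n].
Proof.
move=> SC oU oV U0 V0 [_ [A [infA Apos BA]]].
have [k [Nk /SIP_disjoint_sums[F0 [G0 [uFG0 FG0A ek]]]]] :=
  mild_mixing_SIP oU oV U0 V0 infA Apos.
have oW : open (U `&` iter k T @^-1` V).
  by apply: openI => //; exact: open_iter_preimage.
have W0 : U `&` iter k T @^-1` V !=set0 by case: Nk => _ [_ [[x Ux <-] Vkx]]; exists x.
have [p [t [F [G [t0 blk ret]]]]] := lacunary_IP_system (sumn (F0 ++ G0)) infA oW W0.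
have t_step j : t j <= t j.+1.
  by have [/andP[tp pt] _ _ _ _] := blk j; exact: ltnW (leq_trans tp pt).
have p_step j : p j < p j.+1.
  have [/andP[_ pt] _ _ _ _] := blk j; have [/andP[tp _] _ _ _ _] := blk j.+1.
  exact: leq_ltn_trans pt tp.
have p_pos : range p `<=` [set n | 0 < n].
  by move=> _ [j _ <-]; have [/andP[tp _] _ _ _ _] := blk j; exact: leq_ltn_trans (leq0n _) tp.
have infp : infinite_set (range p).
  exact/infinite_range_inj/incn_inj/leq_mono/(homo_ltn ltn_trans p_step).
have [s [[s0 /SIP_range[I1 [I2 [uI es]]]] Csk]] := SC k _ (SIP_set_SIP infp p_pos).
exists (s + k); split => //; last first.
  move: (uI); rewrite cat_uniq => /and3P[uI1 _ uI2].
  exact: IP_returns_return_times ret s0 uI1 uI2 (eq_Posz_sub es).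
apply: BA; first by rewrite addn_gt0 s0.
(* Block 0 represents k, block j.+1 represents p j. *)
pose P b := if b is j.+1 then F j else F0.
pose Q b := if b is j.+1 then G j else G0.
have blocks b : [/\ uniq (P b), uniq (Q b) & forall a, a \in P b ++ Q b ->
    A a /\ (if b is j.+1 then t j else 0) < a <= t b].
  case: b => [|j] /=; last by have [_ uF uG FGA _] := blk j.
  move: (uFG0); rewrite cat_uniq => /and3P[uF0 _ uG0]; split => // a aFG.
  have Aa := FG0A a aFG; split => //.
  by rewrite (Apos _ Aa) t0 (mem_leq_sumn aFG).
have uI' : uniq ((0 :: map succn I1) ++ map succn I2).
  rewrite cat_cons -map_cat cons_uniq (map_inj_uniq succn_inj) uI andbT.
  by apply/mapP => -[].
move: (SIP_signed_sum_intervals t_step uI' blocks) => /=.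
have wp j : (Posz (sumn (F j)) - Posz (sumn (G j)))%R = Posz (p j).
  by have [_ _ _ _ <-] := blk j.
rewrite big_cons !big_map /= -ek !(eq_bigr _ (fun j _ => wp j)).
by rewrite -!(big_morph Posz PoszD (erefl _)) -addrA -es -PoszD addnC.
Qed.

Lemma SIPstar_translatesI_return_times (C : set nat) (U V : set Y) :
  (forall y, exists x, T x = y) -> SIPstar_translates C ->
  open U -> open V -> U !=set0 -> V !=set0 ->
  SIPstar_translates (C `&` return_times T U V).
Proof.
move=> Tsurj SC oU oV U0 V0 k B SB.
(* Apply the previous lemma to C - k and T^-k V. *)
have SCk : SIPstar_translates [set m | C (m + k)].
  by move=> k' B' /(SC (k' + k))[s [B's Cs]]; exists s; rewrite /= -addnA.
have oV' : open (iter k T @^-1` V) by exact: open_iter_preimage.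
have V'0 : iter k T @^-1` V !=set0.
  by have [v Vv] := V0; have [x xv] := iter_surj Tsurj k v; exists x; rewrite /= xv.
have [n [Bn Cnk [n0 [_ [[y Uy <-] Vnky]]]]] := return_times_meet_SIPstar SCk oU oV' U0 V'0 SB.
exists n; split => //; split => //; split; first by rewrite addn_gt0 n0.
by exists (iter (n + k) T y); split; [exists y | rewrite addnC iterD].
Qed.

End MildMixing.

Lemma seq_fin_choice (T : eqType) (Z : Type) (L : seq T) (P : T -> Z -> Prop) :
  (forall s, s \in L -> exists z, P s z) ->
  exists J : seq Z, forall s, s \in L -> exists2 z, List.In z J & P s z.
Proof.
elim: L => [|s L IH] PL; first by exists [::].
have [J HJ] : exists J : seq Z, forall s', s' \in L -> exists2 z, List.In z J & P s' z.
  by apply: IH => s' s'L; apply: PL; rewrite inE s'L orbT.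
have [z Psz] := PL s (mem_head _ _).
exists (z :: J) => s'; rewrite inE => /predU1P[->|/HJ[z' z'J Ps'z']].
  by exists z; [left|].
by exists z'; [right|].
Qed.

Lemma open_bigcap_seq (Z : topologicalType) (L : seq (set Z)) :
  (forall s, s \in L -> open s) -> open (\bigcap_(s in [set` L]) s).
Proof.
move=> oL; rewrite bigcap_seq big_seq.
by apply: (big_ind open openT (@openI Z)) => s /oL.
Qed.

Section Product.
Variables (I : Type) (X : I -> topologicalType).
Let I' : eqType := {classic I}.

Lemma prod_map_iter (T : forall i, X i -> X i) n (y : prod_topology X) :
  iter n (prod_map T) y = (fun i => iter n (T i) (y i)).
Proof. by elim: n => // n IH; rewrite iterS IH. Qed.

Lemma prod_open_finite_support (U : set (prod_topology X)) (x : prod_topology X) :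
  open U -> U x -> exists (J : seq I) (O : forall i, set (X i)),
  [/\ forall i, open (O i), forall i, O i (x i) &
      forall y, (forall i, List.In i J -> O i (y i)) -> U y].
Proof.
move=> oU Ux; have : nbhs x U by apply: open_nbhs_nbhs.
rewrite /nbhs /= /nbhs_of_open /= => -[] P [] [] Q Qfin <- [] B QB Bx BU.
have [L Lcyl LB] := Qfin _ QB.
pose Ls : seq (set (prod_topology X)) := finmap.enum_fset L.
have Lcyl' s : s \in Ls -> exists i, exists2 M : set (X i), open M & s = [set f | M (f i)].
  by move/Lcyl/set_mem => [i _ [M oM <-]]; exists i, M.
have [J LJ] := seq_fin_choice Lcyl'.
have oB : open B.
  rewrite -LB; apply: (@open_bigcap_seq _ Ls) => s /Lcyl'[i [M oM ->]].
  have proj_cont : continuous ((fun f : prod_topology X => f i) : prod_topology X -> X i).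
    exact: (@proj_continuous I' X i).
  by move/continuousP: proj_cont; apply.
exists J, (fun i => @dfwith I' X x i @^-1` B); split.
- move=> i; have dfwith_cont : continuous (@dfwith I' X x i : X i -> prod_topology X).
    exact: (@dfwith_continuous I' X x i).
  by move/continuousP: dfwith_cont; apply.
- move=> i /=; have -> // : @dfwith I' X x i (x i) = x.
  by apply: functional_extensionality_dep => j; case: dfwithP.
move=> y yB; apply: BU; exists B => //; change (B y); rewrite -LB => s sL.
have [i iJ [M oM es]] := LJ s sL.
by move: (yB i iJ); rewrite -LB => /(_ s sL); rewrite es /= dfwithin.
Qed.

Theorem prod_mild_mixing (T : forall i, X i -> X i) :
  (forall i, continuous (T i)) -> (forall i y, exists x, T i x = y) ->
  (forall i, mild_mixing (T i)) ->
  mild_mixing (prod_map T : prod_topology X -> prod_topology X).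
Proof.
move=> cT Tsurj mmT U V oU oV [u Uu] [v Vv] B SB.
have [JU [OU [oOU OUu UO]]] := prod_open_finite_support oU Uu.
have [JV [OV [oOV OVv VO]]] := prod_open_finite_support oV Vv.
have SJ J : SIPstar_translates
    [set n | forall i, List.In i J -> return_times (T i) (OU i) (OV i) n].
  elim: J => [|i J IH]; first exact: SIPstar_translatesS SIPstar_translatesT.
  have OU0 : OU i !=set0 by exists (u i).
  have OV0 : OV i !=set0 by exists (v i).
  apply: SIPstar_translatesS
    (SIPstar_translatesI_return_times (cT i) (mmT i) (Tsurj i) IH (oOU i) (oOV i) OU0 OV0).
  by move=> n [NJ Ni] j [<-|jJ]; [exact: Ni | exact: NJ].
have [n [Bn]] := SJ (JU ++ JV) 0 B SB; rewrite addn0 => Nn.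
have yP i : {z | List.In i (JU ++ JV) -> OU i z /\ OV i (iter n (T i) z)}.
  apply: cid; have [iJ|niJ] := pselect (List.In i (JU ++ JV)); last by exists (u i).
  by have [_ [_ [[z Oz <-] OVz]]] := Nn i iJ; exists z.
pose y : prod_topology X := fun i => sval (yP i).
exists n; split => //; split; first exact: SB.1 n Bn.
exists (iter n (prod_map T) y); split.
  exists y => //; apply: UO => i iJ.
  by have [] := svalP (yP i) (List.in_or_app _ _ _ (or_introl iJ)).
rewrite prod_map_iter; apply: VO => i iJ.
by have [] := svalP (yP i) (List.in_or_app _ _ _ (or_intror iJ)).
Qed.

End Product.

Theorem corollary3p8 (R : realType) (I : Type) (X : I -> metricType R)
    (T : forall i, X i -> X i)
    (hcpt : forall i, compact [set: X i])
    (hhom : forall i, homeomorphism (T i))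
    (hmm : forall i, mild_mixing (T i)) :
  mild_mixing (prod_map T : prod_topology X -> prod_topology X).
Proof.
apply: prod_mild_mixing hmm => [i | i y].
  by have [_ [_ _ cTi _]] := hhom i.
by have [S [_ ST _ _]] := hhom i; exists (S y); rewrite ST.
Qed.
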